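(* Let $p\leq q$ be positive integers, $n=p+q$, and let $M$ be an $n\times n$ complex matrix. Then $M$ satisfies $M=M^*$ and $M^*I_{p,q}M=I_{p,q}$ if and only if there exist an integer $k$ with $0\leq k\leq q$, vectors $z_1^+,\dots,z_k^+\in\mathbb{C}^p$ that are pairwise orthogonal (some of them possibly zero), and vectors $z_1^-,\dots,z_k^-\in\mathbb{C}^q$ that are pairwise orthogonal (some of them possibly zero), such that for every $j$ \[ \|z_j^+\|^2+\|z_j^-\|^2=1,\qquad \|z_j^+\|^2\neq\|z_j^-\|^2, \] and such that either $M$ or $-M$ equals \[ \sum_{j=1}^k\lambda_j z_jz_j^*-I_{p,q},\qquad\text{where } z_j=\begin{pmatrix}z_j^+\\ z_j^-\end{pmatrix}\in\mathbb{C}^n,\quad \lambda_j=\frac{2}{\|z_j^+\|^2-\|z_j^-\|^2}. \]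
   Context: $I_{p,q}=\mathrm{diag}\{I_p,-I_q\}$, where $I_p$ is the $p\times p$ identity matrix; $M^*$ and $z^*$ denote conjugate transposes; $\|\cdot\|$ and orthogonality refer to the standard Euclidean (Hermitian) inner product $\langle u,v\rangle=u^*v$. Throughout the paper it is assumed that $p\leq q$. *)

(* Complex numbers: an arbitrary numClosedFieldType C
   (e.g. algC, or R[i] for a real closed field R); conjugation is conjC. *)
From HB Require Import structures.
From mathcomp Require Import all_boot all_order all_algebra.
From mathcomp Require Export sesquilinear spectral.
Set Implicit Arguments. Unset Strict Implicit. Unset Printing Implicit Defensive.
Import Order.TTheory GRing.Theory Num.Theory.
Local Open Scope ring_scope.
Local Open Scope sesquilinear_scope.

Definition Ipq (C : numClosedFieldType) (p q : nat) : 'M[C]_(p + q) :=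
  block_mx 1%:M 0 0 (- 1%:M).

Definition adj (C : numClosedFieldType) (m n : nat) (M : 'M[C]_(m, n)) : 'M[C]_(n, m) :=
  M ^t*.

Definition hdot (C : numClosedFieldType) (n : nat) (u v : 'cV[C]_n) : C :=
  (adj u *m v) 0 0.

Definition nrm2 (C : numClosedFieldType) (n : nat) (u : 'cV[C]_n) : C := hdot u u.

(* Put J := I_{p,q}, so that J^2 = 1.  A Hermitian M satisfies M J M = J iff
   P := M + J satisfies P J P = 2 P.  Write the Hermitian P spectrally as
   sum_j e_j u_j u_j^* with orthonormal u_j and nonzero e_j; then P J P = 2 P
   says exactly that the u_j are also J-orthogonal with e_j <u_j, J u_j> = 2.
   Splitting u_j = (z_j^+, z_j^-), orthonormality and J-orthogonality together
   make the z_j^+ and the z_j^- orthogonal, and give e_j = lambda_j.  There are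
   rank (M + J) terms, and (M + J) J (J - M) = 0 gives
   rank (M + J) + rank (J - M) <= p + q <= 2 q, so after replacing M by -M if
   necessary there are at most q of them. *)

From mathcomp Require Import all_boot all_algebra zify.
Import GRing.Theory Num.Theory.
Local Open Scope ring_scope.
Set Implicit Arguments. Unset Strict Implicit. Unset Printing Implicit Defensive.

Section IndefiniteForms.
Variable C : numClosedFieldType.

Lemma adjK m n (A : 'M[C]_(m, n)) : adj (adj A) = A.
Proof. exact: trmxCK. Qed.

Lemma adjM m n r (A : 'M[C]_(m, n)) (B : 'M[C]_(n, r)) :
  adj (A *m B) = adj B *m adj A.
Proof. by rewrite /adj trmx_mul map_mxM. Qed.

Lemma adjD m n (A B : 'M[C]_(m, n)) : adj (A + B) = adj A + adj B.
Proof. by rewrite /adj linearD map_mxD. Qed.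

Lemma adjN m n (A : 'M[C]_(m, n)) : adj (- A) = - adj A.
Proof. by rewrite /adj linearN map_mxN. Qed.

Lemma adjZ m n c (A : 'M[C]_(m, n)) : adj (c *: A) = c^* *: adj A.
Proof. by rewrite /adj linearZ /= map_mxZ. Qed.

Lemma adj_sum m n k (F : 'I_k -> 'M[C]_(m, n)) :
  adj (\sum_(j < k) F j) = \sum_(j < k) adj (F j).
Proof. by apply: (big_morph _ (@adjD m n)); rewrite /adj linear0 map_mx0. Qed.

Lemma adj_col_mx m1 m2 n (A : 'M[C]_(m1, n)) (B : 'M[C]_(m2, n)) :
  adj (col_mx A B) = row_mx (adj A) (adj B).
Proof. by rewrite /adj tr_col_mx map_row_mx. Qed.

Lemma hdotC n (u v : 'cV[C]_n) : (hdot u v)^* = hdot v u.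
Proof. by rewrite /hdot -[in RHS](adjK (adj v *m u)) adjM adjK !mxE. Qed.

Lemma mx11_hdot n (u v : 'cV[C]_n) : adj u *m v = (hdot u v)%:M.
Proof. exact: mx11_scalar. Qed.

Definition jdot n (J : 'M[C]_n) (u v : 'cV[C]_n) := (adj u *m J *m v) 0 0.

Lemma mx11_jdot n (J : 'M[C]_n) (u v : 'cV[C]_n) : adj u *m J *m v = (jdot J u v)%:M.
Proof. exact: mx11_scalar. Qed.

Lemma hdot_col_mx p q (a c : 'cV[C]_p) (b d : 'cV[C]_q) :
  hdot (col_mx a b) (col_mx c d) = hdot a c + hdot b d.
Proof. by rewrite /hdot adj_col_mx mul_row_col [LHS]mxE. Qed.

Lemma adj_Ipq p q : adj (Ipq C p q) = Ipq C p q.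
Proof.
by rewrite /adj /Ipq tr_block_mx map_block_mx !trmx0 !map_mx0 linearN /=
  map_mxN !trmx1 map_mx1 (map_mx1 Num.conj_op).
Qed.

Lemma Ipq_mulmx_Ipq p q : Ipq C p q *m Ipq C p q = 1%:M.
Proof.
rewrite /Ipq mulmx_block !mulmx0 !mul0mx !mulmx1 !addr0 !add0r mulNmx mul1mx.
by rewrite opprK -scalar_mx_block.
Qed.

Lemma jdot_col_mx p q (a c : 'cV[C]_p) (b d : 'cV[C]_q) :
  jdot (Ipq C p q) (col_mx a b) (col_mx c d) = hdot a c - hdot b d.
Proof.
rewrite /jdot /Ipq -mulmxA mul_block_col !mul0mx mul1mx addr0 add0r mulNmx mul1mx.
by rewrite adj_col_mx mul_row_col mulmxN [LHS]mxE [X in _ + X]mxE.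
Qed.

Section Involution.
Variables (n : nat) (J : 'M[C]_n).
Hypothesis JJ : J *m J = 1%:M.

Lemma sandwich_addJ (N : 'M[C]_n) :
  (N + J) *m J *m (N + J) = 2 *: (N + J) <-> N *m J *m N = J.
Proof.
have -> : (N + J) *m J *m (N + J) = N *m J *m N + (2 *: N + J).
  rewrite !mulmxDl !mulmxDr JJ !mul1mx -[N *m J *m J]mulmxA JJ mulmx1.
  by rewrite scaler_nat mulr2n !addrA.
have -> : 2 *: (N + J) = J + (2 *: N + J).
  by rewrite scalerDr [2 *: J]scaler_nat mulr2n addrCA.
by split=> [/addIr | ->].
Qed.

Lemma rank_addJ_oppJ (N : 'M[C]_n) :
  N *m J *m N = J -> (\rank (N + J)%R + \rank (- N + J)%R <= n)%N.
Proof.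
move=> NJN; have Jfree : row_free J by rewrite row_free_unit; case: (mulmx1_unit JJ).
have prod0 : (N + J) *m J *m (- N + J) = 0.
  rewrite mulmxDr mulmxN !mulmxDl NJN JJ !mul1mx -mulmxA JJ mulmx1.
  by rewrite [N + J]addrC addNr.
have := mxrank_mul_min ((N + J) *m J) (- N + J).
by rewrite prod0 mxrank0 mxrankMfree // leqn0 subn_eq0.
Qed.

Lemma sandwichN (N : 'M[C]_n) : (- N) *m J *m (- N) = N *m J *m N.
Proof. by rewrite mulNmx !mulmxN mulNmx opprK. Qed.

End Involution.

Lemma outer_sandwich n (J : 'M[C]_n) (a b : C) (x y : 'cV[C]_n) :
  (a *: (x *m adj x)) *m J *m (b *: (y *m adj y)) = (a * b * jdot J x y) *: (x *m adj y).
Proof.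
rewrite -!scalemxAl -scalemxAr scalerA.
have -> : x *m adj x *m J *m (y *m adj y) = x *m (adj x *m J *m y) *m adj y.
  by rewrite !mulmxA.
by rewrite mx11_jdot mul_mx_scalar -scalemxAl scalerA.
Qed.

Definition rank1_sum n k (e : 'I_k -> C) (u : 'I_k -> 'cV[C]_n) : 'M[C]_n :=
  \sum_(j < k) e j *: (u j *m adj (u j)).

Section RankOneSums.
Variables (n k : nat) (e : 'I_k -> C) (u : 'I_k -> 'cV[C]_n).

Lemma adj_rank1_sum : adj (rank1_sum e u) = rank1_sum (fun j => (e j)^*) u.
Proof. by rewrite adj_sum; apply: eq_bigr => j _; rewrite adjZ adjM adjK. Qed.

Lemma rank1_sum_sandwich (J : 'M[C]_n) :
    (forall i j, i != j -> jdot J (u i) (u j) = 0) ->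
    (forall j, e j * jdot J (u j) (u j) = 2) ->
  rank1_sum e u *m J *m rank1_sum e u = 2 *: rank1_sum e u.
Proof.
move=> Jorth Jnorm; rewrite !mulmx_suml scaler_sumr; apply: eq_bigr => i _.
rewrite mulmx_sumr (bigD1 i) //= big1 => [|j ji].
  by rewrite outer_sandwich -mulrA Jnorm mulrC scalerA addr0.
by rewrite outer_sandwich Jorth 1?eq_sym // mulr0 scale0r.
Qed.

Hypothesis u_orthonormal : forall i j, hdot (u i) (u j) = (i == j)%:R.

Lemma rank1_sum_mulmx j : rank1_sum e u *m u j = e j *: u j.
Proof.
rewrite mulmx_suml (bigD1 j) //= big1 => [|i ij].
  by rewrite -scalemxAl -mulmxA mx11_hdot u_orthonormal eqxx mul_mx_scalar scale1r addr0.
by rewrite -scalemxAl -mulmxA mx11_hdot u_orthonormal (negbTE ij) mul_mx_scalar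
  !scale0r scaler0.
Qed.

Lemma mulmx_rank1_sum i : adj (u i) *m rank1_sum e u = e i *: adj (u i).
Proof.
rewrite mulmx_sumr (bigD1 i) //= big1 => [|j ji].
  by rewrite -scalemxAr mulmxA mx11_hdot u_orthonormal eqxx mul_scalar_mx scale1r addr0.
by rewrite -scalemxAr mulmxA mx11_hdot u_orthonormal eq_sym (negbTE ji) mul_scalar_mx
  !scale0r scaler0.
Qed.

Hypothesis e_neq0 : forall j, e j != 0.

Lemma rank1_sum_sandwich_jdot (J : 'M[C]_n) :
    rank1_sum e u *m J *m rank1_sum e u = 2 *: rank1_sum e u ->
  forall i j, e j * jdot J (u i) (u j) = (i == j)%:R * 2.
Proof.
move=> PJP i j; apply: (mulfI (e_neq0 i)).
have lhs : adj (u i) *m (rank1_sum e u *m J *m rank1_sum e u) *m u j =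
    (e i * e j * jdot J (u i) (u j))%:M.
  rewrite !mulmxA mulmx_rank1_sum -!scalemxAl -mulmxA rank1_sum_mulmx -scalemxAr.
  by rewrite mx11_jdot scalerA scale_scalar_mx.
have rhs : adj (u i) *m (2 *: rank1_sum e u) *m u j = (2 * e i * (i == j)%:R)%:M.
  rewrite -scalemxAr mulmx_rank1_sum -!scalemxAl mx11_hdot u_orthonormal.
  by rewrite !scale_scalar_mx mulrA.
have := congr1 (fun X => adj (u i) *m X *m u j) PJP; rewrite lhs rhs => /matrixP/(_ 0 0).
by rewrite !mxE eqxx !mulr1n mulrA => ->; rewrite [_ * 2]mulrC mulrAC; exact: mulrC.
Qed.

Lemma rank1_sum_rank : (k <= \rank (rank1_sum e u))%N.
Proof.
pose U : 'M[C]_(k, n) := \matrix_(j < k) adj (u j).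
have rowU i : row i U = adj (u i) by rewrite rowK.
have UU : U *m adj U = 1%:M.
  apply/matrixP => i j; rewrite [RHS]mxE -u_orthonormal /hdot !mxE.
  by apply: eq_bigr => c _; rewrite !mxE conjCK.
have UP : U *m rank1_sum e u *m adj U = diag_mx (\row_j e j).
  apply/row_matrixP => i; rewrite !row_mul rowU mulmx_rank1_sum -scalemxAl.
  by rewrite -rowU -row_mul UU row1 row_diag_mx mxE.
have e_unit : diag_mx (\row_j e j) \in unitmx.
  by rewrite unitmxE det_diag unitfE; apply/prodf_neq0 => j _; rewrite mxE.
rewrite -[X in (X <= _)%N](mxrank_unit e_unit) -UP.
exact: leq_trans (mxrankM_maxl _ _) (mxrankM_maxr _ _).
Qed.

End RankOneSums.

Lemma mulmx_adj_diag m n (U : 'M[C]_(m, n)) (d : 'rV[C]_m) :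
  adj U *m diag_mx d *m U = rank1_sum (fun j => d 0 j) (fun j => adj (row j U)).
Proof.
apply/matrixP => a b; rewrite mul_mx_diag summxE !mxE; apply: eq_bigr => j _.
by rewrite !mxE big_ord1 !mxE conjCK mulrCA mulrA.
Qed.

Lemma hdot_adj_row m n (U : 'M[C]_(m, n)) i j :
  hdot (adj (row i U)) (adj (row j U)) = (U *m adj U) i j.
Proof. by rewrite /hdot adjK !mxE; apply: eq_bigr => c _; rewrite !mxE. Qed.

Lemma hermitian_rank1_sum n (A : 'M[C]_n) : adj A = A ->
  exists k (e : 'I_k -> C) (u : 'I_k -> 'cV[C]_n),
    [/\ (k <= \rank A)%N, forall i j, hdot (u i) (u j) = (i == j)%:R,
        forall j, e j != 0 & A = rank1_sum e u].
Proof.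
move=> A_herm.
have /hermitian_normalmx/orthomx_spectralP : A \is hermsymmx.
  by apply/is_hermitianmxP; rewrite expr0 scale1r; exact: esym A_herm.
rewrite invmx_unitary ?spectral_unitarymx // mulmx_adj_diag.
have /unitarymxP PP := spectral_unitarymx A.
set P := spectralmx A in PP *; set d := spectral_diag A => A_eq.
pose S := [set i | d 0 i != 0].
pose e (j : 'I_#|S|) := d 0 (enum_val j).
pose u (j : 'I_#|S|) := adj (row (enum_val j) P).
have u_orth i j : hdot (u i) (u j) = (i == j)%:R.
  by rewrite hdot_adj_row PP mxE (inj_eq enum_val_inj).
have e_neq0 j : e j != 0 by have := enum_valP j; rewrite inE.
have A_sum : A = rank1_sum e u.
  rewrite A_eq /rank1_sum (bigID (mem S)) /= [X in _ + X]big1 ?addr0.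
    by rewrite big_enum_val.
  by move=> i; rewrite inE negbK => /eqP ->; rewrite scale0r.
by exists #|S|, e, u; split; rewrite // {1}A_sum; apply: rank1_sum_rank.
Qed.

Lemma add_sub_eq0 (a b : C) : a + b = 0 -> a - b = 0 -> a = 0 /\ b = 0.
Proof.
move=> /eqP; rewrite addr_eq0 => /eqP ->.
by rewrite -opprD -mulr2n => /eqP; rewrite oppr_eq0 mulrn_eq0 /= => /eqP ->; rewrite oppr0.
Qed.

Lemma Ipq_sandwich_decomposition p q (P : 'M[C]_(p + q)) :
    adj P = P -> P *m Ipq C p q *m P = 2 *: P ->
  exists k (zp : 'I_k -> 'cV[C]_p) (zm : 'I_k -> 'cV[C]_q),
    [/\ (k <= \rank P)%N,
        (forall i j, i != j -> hdot (zp i) (zp j) = 0 /\ hdot (zm i) (zm j) = 0),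
        (forall j, nrm2 (zp j) + nrm2 (zm j) = 1),
        (forall j, nrm2 (zp j) != nrm2 (zm j)) &
        P = rank1_sum (fun j => 2 / (nrm2 (zp j) - nrm2 (zm j)))
                      (fun j => col_mx (zp j) (zm j))].
Proof.
move=> P_herm; have [k [e [u [rk u_orth e_neq0 P_eq]]]] := hermitian_rank1_sum P_herm.
rewrite {1 2 3}P_eq => PJP; have Je := rank1_sum_sandwich_jdot u_orth e_neq0 PJP.
pose zp j := usubmx (u j); pose zm j := dsubmx (u j).
have hdotE i j : hdot (zp i) (zp j) + hdot (zm i) (zm j) = (i == j)%:R.
  by rewrite -hdot_col_mx !vsubmxK.
have jdotE i j : hdot (zp i) (zp j) - hdot (zm i) (zm j) = jdot (Ipq C p q) (u i) (u j).
  by rewrite -jdot_col_mx !vsubmxK.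
have jdot_neq0 j : jdot (Ipq C p q) (u j) (u j) != 0.
  by apply/eqP => J0; have /eqP := Je j j; rewrite J0 mulr0 eqxx mul1r eq_sym pnatr_eq0.
exists k, zp, zm; split => // [i j ij | j | j |].
- apply: add_sub_eq0; first by rewrite hdotE (negbTE ij).
  by rewrite jdotE; apply: (mulfI (e_neq0 j)); rewrite Je (negbTE ij) mul0r mulr0.
- by rewrite hdotE eqxx.
- by rewrite -subr_eq0 jdotE.
rewrite P_eq /rank1_sum; apply: eq_bigr => j _.
have := Je j j; rewrite eqxx mul1r => <-.
by rewrite /zp /zm vsubmxK /nrm2 jdotE mulfK.
Qed.

Lemma rank1_sum_subIpq_isometry p q k (zp : 'I_k -> 'cV[C]_p) (zm : 'I_k -> 'cV[C]_q) :
    (forall i j, i != j -> hdot (zp i) (zp j) = 0 /\ hdot (zm i) (zm j) = 0) ->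
    (forall j, nrm2 (zp j) != nrm2 (zm j)) ->
  let N := rank1_sum (fun j => 2 / (nrm2 (zp j) - nrm2 (zm j)))
                     (fun j => col_mx (zp j) (zm j)) - Ipq C p q in
  adj N = N /\ N *m Ipq C p q *m N = Ipq C p q.
Proof.
move=> z_orth z_neq N; set P := rank1_sum _ _ in N *.
have P_herm : adj P = P.
  rewrite adj_rank1_sum /P /rank1_sum; apply: eq_bigr => j _; congr (_ *: _).
  by rewrite fmorph_div rmorphB /= rmorph_nat /nrm2 !hdotC.
have PJP : P *m Ipq C p q *m P = 2 *: P.
  apply: rank1_sum_sandwich => [i j ij | j]; rewrite jdot_col_mx.
    by have [-> ->] := z_orth i j ij; rewrite subrr.
  by rewrite divfK // subr_eq0.
split; first by rewrite /N adjD adjN P_herm adj_Ipq.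
by apply/(sandwich_addJ (Ipq_mulmx_Ipq p q)); rewrite subrK.
Qed.

End IndefiniteForms.

Theorem lemma3p4 (C : numClosedFieldType) (p q : nat) (hp : (0 < p)%N) (hpq : (p <= q)%N)
    (M : 'M[C]_(p + q)) :
  (M = adj M /\ adj M *m Ipq C p q *m M = Ipq C p q) <->
  exists (k : nat) (zp : 'I_k -> 'cV[C]_p) (zm : 'I_k -> 'cV[C]_q),
    [/\ (k <= q)%N,
        (forall i j : 'I_k, i != j ->
           hdot (zp i) (zp j) = 0 /\ hdot (zm i) (zm j) = 0),
        (forall j : 'I_k, nrm2 (zp j) + nrm2 (zm j) = 1),
        (forall j : 'I_k, nrm2 (zp j) != nrm2 (zm j)) &
        (let S := \sum_(j < k)
               ((2 / (nrm2 (zp j) - nrm2 (zm j))) *: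
                  (col_mx (zp j) (zm j) *m adj (col_mx (zp j) (zm j))))
               - Ipq C p q in
         M = S \/ - M = S)].
Proof.
have JJ := Ipq_mulmx_Ipq C p q; set J := Ipq C p q in JJ *.
split=> [[M_herm MJM] | [k [zp [zm [_ z_orth _ z_neq S_eq]]]]]; last first.
  have [N_herm NJN] := rank1_sum_subIpq_isometry z_orth z_neq.
  case: S_eq => [-> | M_eq]; first by rewrite N_herm.
  by rewrite -[M]opprK M_eq adjN N_herm sandwichN.
have {}MJM : M *m J *m M = J by rewrite {1}M_herm.
have [N [N_herm NJN rkN MN]] : exists N, [/\ adj N = N, N *m J *m N = J,
    (\rank (N + J)%R <= q)%N & M = N \/ - M = N].
  have := rank_addJ_oppJ JJ MJM.
  case: (leqP (\rank (M + J)%R) q) => rkM rk_sum.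
    by exists M; split; [rewrite -M_herm | | | left].
  have rk_oppM : (\rank (- M + J)%R <= q)%N by lia.
  by exists (- M); split; rewrite ?adjN -?M_herm ?sandwichN //; right.
have [|k [zp [zm [rk z_orth z_norm z_neq P_eq]]]] :=
  @Ipq_sandwich_decomposition C p q (N + J) _ ((sandwich_addJ JJ N).2 NJN).
  by rewrite adjD N_herm adj_Ipq.
exists k, zp, zm; split => //; first exact: leq_trans rk rkN.
by move: MN; rewrite -(addrK J N) P_eq.
Qed.
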